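(* Let $\delta,\alpha\geq0$, $\sigma\in\mathbb{R}$, $\varepsilon\in(0,1)$, and assume $\delta\leq\theta\leq\alpha$. Let $\widehat{v}(t,\xi)$ solve $(1+|\xi|^{2\delta})\widehat{v}_{tt}+|\xi|^{2\theta}\widehat{v}_t+|\xi|^{2\alpha}\widehat{v}=0$, and define for $|\xi|\geq\varepsilon$ $$\rho(\xi)=\begin{cases}\dfrac{\varepsilon^{2\alpha+2\delta-4\theta}|\xi|^{2\theta}}{2(1+|\xi|^{2\delta})}&\text{if }\alpha+\delta\geq2\theta,\\[2mm] \dfrac{\varepsilon^{-2\alpha+4\theta}|\xi|^{2\alpha-2\theta}}{4}&\text{if }\alpha+\delta<2\theta,\end{cases}$$ $E_1(t,\xi)=\frac12|\xi|^{2\delta+\sigma}|\widehat{v}_t|^2+\frac12|\xi|^{2\alpha+\sigma}|\widehat{v}|^2$ and $F(t,\xi)=|\xi|^{2\theta+\sigma}|\widehat{v}_t|^2+\rho(\xi)|\xi|^{2\alpha+\sigma}|\widehat{v}|^2$. Then $E_1(t,\xi)\lesssim F(t,\xi)$ for all $t\geq0$ and $|\xi|\geq\varepsilon$.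
   Context: $\lesssim$ means $\leq C\cdot$ with $C>0$ independent of $t$ and $\xi$. *)

From HB Require Import structures.
From mathcomp Require Import all_boot all_order all_algebra.
From mathcomp Require Import all_classical all_reals all_analysis.
Set Implicit Arguments. Unset Strict Implicit. Unset Printing Implicit Defensive.
Import Order.TTheory GRing.Theory Num.Theory.
Import numFieldNormedType.Exports.
Local Open Scope ring_scope.

Definition enorm (R : realType) (n : nat) (xi : 'I_n -> R) : R :=
  Num.sqrt (\sum_(i < n) xi i ^+ 2).

Definition rho (R : realType) (eps alpha delta theta r : R) : R :=
  if 2 * theta <= alpha + delta then
    eps `^ (2 * alpha + 2 * delta - 4 * theta) * r `^ (2 * theta)
      / (2 * (1 + r `^ (2 * delta)))
  else
    eps `^ (- 2 * alpha + 4 * theta) * r `^ (2 * alpha - 2 * theta) / 4.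

(* E_1 and F, for a complex value vhat = vr + i vi with t-derivative
   vt = vtr + i vti; |.|^2 is the squared complex modulus. *)
Definition E1 (R : realType) (alpha delta sigma r vr vi vtr vti : R) : R :=
  2^-1 * r `^ (2 * delta + sigma) * (vtr ^+ 2 + vti ^+ 2)
  + 2^-1 * r `^ (2 * alpha + sigma) * (vr ^+ 2 + vi ^+ 2).

Definition Fen (R : realType) (eps alpha delta theta sigma r vr vi vtr vti : R) : R :=
  r `^ (2 * theta + sigma) * (vtr ^+ 2 + vti ^+ 2)
  + rho eps alpha delta theta r * r `^ (2 * alpha + sigma) * (vr ^+ 2 + vi ^+ 2).

(* vhat(., xi) = vr + i vi solves
   (1+|xi|^{2 delta}) v_tt + |xi|^{2 theta} v_t + |xi|^{2 alpha} v = 0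
   for t >= 0 (v twice differentiable in t; real coefficients, so the
   complex ODE is equivalent to the ODE for real and imaginary parts). *)
Definition solves_ode (R : realType) (alpha delta theta r : R) (u : R -> R) : Prop :=
  (forall t, derivable u t 1) /\ (forall t, derivable (derive1 u) t 1) /\
  forall t, 0 <= t ->
    (1 + r `^ (2 * delta)) * derive1n 2 u t + r `^ (2 * theta) * derive1 u t
      + r `^ (2 * alpha) * u t = 0.

(* Both energies are quadratic forms in (v_t, v) with the same kind of
   coefficients, so E_1 <= C F reduces to comparing coefficients, uniformly in
   |xi| >= eps: |xi|^(2 delta) <= eps^(2 delta - 2 theta) |xi|^(2 theta) because
   delta <= theta, and rho is bounded below by a positive constant on
   |xi| >= eps. The estimate is pointwise in (t, xi). *)
From HB Require Import structures.
From mathcomp Require Import all_boot all_order all_algebra.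
From mathcomp Require Import all_classical all_reals all_analysis.
From mathcomp Require Import lra.
Set Implicit Arguments. Unset Strict Implicit. Unset Printing Implicit Defensive.
Import Order.TTheory GRing.Theory Num.Theory.
Import numFieldNormedType.Exports.
Local Open Scope ring_scope.

Section PowRBounds.
Context {R : realType}.
Implicit Types eps r p q s x y : R.

Lemma ler_powR_nonpos p x y : p <= 0 -> 0 < x -> x <= y -> y `^ p <= x `^ p.
Proof.
move=> p_le0 x_gt0 le_xy; have y_gt0 := lt_le_trans x_gt0 le_xy.
rewrite -(opprK p) (powRN y) (powRN x) lef_pV2 ?posrE ?powR_gt0 //.
by apply: (ge0_ler_powR _ (ltW x_gt0) (ltW y_gt0)); rewrite ?oppr_ge0.
Qed.

Lemma powRD_le_scaled eps r p q s : 0 < eps -> eps <= r -> p <= q ->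
  r `^ (p + s) <= eps `^ (p - q) * r `^ (q + s).
Proof.
move=> eps_gt0 le_eps_r le_pq; have r_gt0 := lt_le_trans eps_gt0 le_eps_r.
have -> : p + s = (p - q) + (q + s) by rewrite addrA subrK.
rewrite powRD ?(gt_eqF r_gt0) ?implybT //; apply: ler_wpM2r; first exact: powR_ge0.
by apply: ler_powR_nonpos; rewrite ?subr_le0.
Qed.

Lemma powR_1D_le eps r p q : 0 < eps -> eps <= 1 -> eps <= r ->
  0 <= p -> p <= q -> eps `^ q * (1 + r `^ p) <= 2 * r `^ q.
Proof.
move=> eps_gt0 eps_le1 le_eps_r p_ge0 le_pq.
have q_ge0 := le_trans p_ge0 le_pq.
have le_q : eps `^ q <= r `^ q.
  exact: (ge0_ler_powR q_ge0 (ltW eps_gt0) (ltW (lt_le_trans eps_gt0 le_eps_r))).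
have le_p : eps `^ q * r `^ p <= r `^ q.
  have := powRD_le_scaled 0 eps_gt0 le_eps_r le_pq; rewrite !addr0 => scaled.
  apply: le_trans (ler_wpM2l (powR_ge0 _ _) scaled) _.
  rewrite mulrA -powRD ?(gt_eqF eps_gt0) ?implybT // addrC subrK ler_piMl ?powR_ge0 //.
  by rewrite -(powRr0 eps) ger_powR ?eps_gt0.
lra.
Qed.

End PowRBounds.

Section Weights.
Variables (R : realType) (eps alpha delta theta : R).
Hypotheses (eps_gt0 : 0 < eps) (eps_le1 : eps <= 1) (delta_ge0 : 0 <= delta)
  (delta_le_theta : delta <= theta) (theta_le_alpha : theta <= alpha).

Lemma rho_bounded_below :
  exists2 m, 0 < m & forall r, eps <= r -> m <= rho eps alpha delta theta r.
Proof.
rewrite /rho; have [_|_] := leP (2 * theta) (alpha + delta).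
- exists (eps `^ (2 * alpha + 2 * delta - 4 * theta) * eps `^ (2 * theta) / 4).
    by rewrite !mulr_gt0 ?powR_gt0.
  move=> r le_eps_r; rewrite -!mulrA; apply: ler_wpM2l; first exact: powR_ge0.
  have den_gt0 : 0 < 2 * (1 + r `^ (2 * delta)) by rewrite mulr_gt0 ?ltr_wpDr ?powR_ge0.
  rewrite ler_pdivlMr //.
  have two_delta_ge0 : 0 <= 2 * delta by rewrite mulr_ge0.
  have two_delta_le : 2 * delta <= 2 * theta by rewrite ler_pM2l.
  have := powR_1D_le eps_gt0 eps_le1 le_eps_r two_delta_ge0 two_delta_le.
  lra.
- exists (eps `^ (- 2 * alpha + 4 * theta) * eps `^ (2 * alpha - 2 * theta) / 4).
    by rewrite !mulr_gt0 ?powR_gt0.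
  move=> r le_eps_r; apply: ler_wpM2r; first by [].
  apply: ler_wpM2l; first exact: powR_ge0.
  apply: (ge0_ler_powR _ (ltW eps_gt0) (ltW (lt_le_trans eps_gt0 le_eps_r)) le_eps_r).
  by rewrite subr_ge0 ler_pM2l.
Qed.

Lemma E1_le_Fen sigma : exists2 C, 0 < C & forall r a b c d, eps <= r ->
  E1 alpha delta sigma r a b c d <= C * Fen eps alpha delta theta sigma r a b c d.
Proof.
have [m m_gt0 le_m_rho] := rho_bounded_below.
set k := eps `^ (2 * delta - 2 * theta).
have k_gt0 : 0 < k by rewrite powR_gt0.
have inv_gt0 : 0 < (2 * m)^-1 by rewrite invr_gt0 mulr_gt0.
exists (k + (2 * m)^-1); first exact: addr_gt0.
move=> r a b c d le_eps_r; rewrite /E1 /Fen [in X in _ <= X]mulrDr.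
have X_ge0 : 0 <= c ^+ 2 + d ^+ 2 by rewrite addr_ge0 ?sqr_ge0.
have Y_ge0 : 0 <= a ^+ 2 + b ^+ 2 by rewrite addr_ge0 ?sqr_ge0.
have S_ge0 : 0 <= r `^ (2 * alpha + sigma) by exact: powR_ge0.
have B_ge0 : 0 <= r `^ (2 * theta + sigma) by exact: powR_ge0.
have le_A_kB : r `^ (2 * delta + sigma) <= k * r `^ (2 * theta + sigma).
  by apply: powRD_le_scaled; rewrite ?ler_pM2l.
apply: lerD.
- rewrite mulrA; apply: ler_wpM2r => //.
  have A_ge0 : 0 <= r `^ (2 * delta + sigma) by exact: powR_ge0.
  have := mulr_ge0 (ltW inv_gt0) B_ge0; lra.
- have rho_ge_m := le_m_rho r le_eps_r.
  have le_half : 2^-1 <= (k + (2 * m)^-1) * rho eps alpha delta theta r.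
    have := ler_wpM2l (ltW inv_gt0) rho_ge_m.
    rewrite invfM -mulrA mulVf ?gt_eqF // mulr1.
    have := mulr_ge0 (ltW k_gt0) (le_trans (ltW m_gt0) rho_ge_m); lra.
  have := ler_wpM2r (mulr_ge0 S_ge0 Y_ge0) le_half.
  by rewrite !mulrA.
Qed.

End Weights.

Theorem lemma3p3 (R : realType) (n : nat) (delta alpha theta sigma eps : R)
  (vr vi : R -> ('I_n -> R) -> R) :
  0 <= delta -> 0 <= alpha -> 0 < eps -> eps < 1 ->
  delta <= theta -> theta <= alpha ->
  (forall xi : 'I_n -> R,
     solves_ode alpha delta theta (enorm xi) (fun t => vr t xi) /\
     solves_ode alpha delta theta (enorm xi) (fun t => vi t xi)) ->
  exists C : R, 0 < C /\
    forall (t : R) (xi : 'I_n -> R), 0 <= t -> eps <= enorm xi ->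
      E1 alpha delta sigma (enorm xi) (vr t xi) (vi t xi)
         (derive1 (fun s => vr s xi) t) (derive1 (fun s => vi s xi) t)
      <= C * Fen eps alpha delta theta sigma (enorm xi) (vr t xi) (vi t xi)
         (derive1 (fun s => vr s xi) t) (derive1 (fun s => vi s xi) t).
Proof.
move=> delta_ge0 _ eps_gt0 eps_lt1 delta_le_theta theta_le_alpha _.
have [C C_gt0 E1_le] :=
  E1_le_Fen eps_gt0 (ltW eps_lt1) delta_ge0 delta_le_theta theta_le_alpha sigma.
by exists C; split=> // t xi _ le_eps; exact: (E1_le _ _ _ _ _ le_eps).
Qed.
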